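(* For any constants $\alpha_1,\dots,\alpha_4$, any smooth $H=H(t,t^-,q,q^-,p,p^-)$ and any smooth $\xi,\eta,\nu$ of $(t,q,p)$, the identity $$\Omega\equiv \xi\frac{\delta\tilde H}{\delta t}+\eta\frac{\delta\tilde H}{\delta q}+\nu\frac{\delta\tilde H}{\delta p}+D(C)+(1-S_+)P$$ holds, where $$\Omega= \nu^{-}(\alpha_{1}\dot{q}+\alpha_{2}\dot{q}^{-})+p^{-}(\alpha_{1}D(\eta)+\alpha_{2}D(\eta^{-}))+\nu(\alpha_{3}\dot{q}+\alpha_{4}\dot{q}^{-})+p(\alpha_{3}D(\eta)+\alpha_{4}D(\eta^{-}))+(\alpha_{2}p^{-}+\alpha_{4}p)\dot{q}^{-}D(\xi-\xi^{-})-\xi H_t-\eta H_q-\nu H_p-\xi^{-}H_{t^-}-\eta^{-}H_{q^-}-\nu^{-}H_{p^-}-HD(\xi),$$ $$C=\eta(\alpha_{4}p^{+}+(\alpha_{2}+\alpha_{3})p+\alpha_{1}p^{-})-\xi\big(\alpha_{2}(p\dot{q}-p^{-}\dot{q}^{-})+\alpha_{4}(p^{+}\dot{q}-p\dot{q}^{-})+H\big),$$ $$P=(\alpha_{2}p^{-}+\alpha_{4}p)D(\eta^{-})+\nu^{-}(\alpha_{1}\dot{q}+\alpha_{2}\dot{q}^{-})-(\alpha_{2}p^{-}+\alpha_{4}p)\dot{q}^{-}D(\xi^{-})-\xi^{-}H_{t^-}-\eta^{-}H_{q^-}-\nu^{-}H_{p^-},$$ and $$\frac{\delta\tilde H}{\delta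 p}=\alpha_1\dot q^++(\alpha_2+\alpha_3)\dot q+\alpha_4\dot q^--\frac{\partial}{\partial p}(H+H^+),\qquad \frac{\delta\tilde H}{\delta q}=-\Big(\alpha_4\dot p^++(\alpha_2+\alpha_3)\dot p+\alpha_1\dot p^-+\frac{\partial}{\partial q}(H+H^+)\Big),$$ $$\frac{\delta\tilde H}{\delta t}=D\big[\alpha_2(p\dot q-p^-\dot q^-)+\alpha_4(p^+\dot q-p\dot q^-)\big]+D(H)-\frac{\partial}{\partial t}(H+H^+).$$
   Context: Fix a constant delay $\tau>0$; $t^\pm=t\pm\tau$, and for a function $f$ of $t$, $f^\pm=f(t\pm\tau)$. $S_+$ is the shift operator sending every variable to its value at the next point ($t^-\mapsto t$, $t\mapsto t^+$, $q^-\mapsto q$, $q\mapsto q^+$, similarly for $p$ and derivatives); $S_-$ is the backward shift; $\xi^\pm=S_\pm(\xi)$ etc. $H^+=S_+(H)=H(t^+,t,q^+,q,p^+,p)$. Subscripts on $H$ denote partial derivatives. $D$ is the total derivative acting on variables at the three points $t^-,t,t^+$: $D=\partial_t+\dot q\partial_q+\dot p\partial_p+\ddot q\partial_{\dot q}+\ddot p\partial_{\dot p}+\cdots$ plus analogous terms for the variables at $t^-$ and $t^+$. $\tilde H=p^{-}(\alpha_{1}\dot{q}+\alpha_{2}\dot{q}^{-})+p(\alpha_{3}\dot{q}+\alpha_{4}\dot{q}^{-})-H$. The quantity $\Omega$ equals $X(\tilde H)+\tilde H D(\xi)$ for the prolonged generator $X=\xi\partial_t+\eta\partial_q+\nu\partial_p+\dots$.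 *)

From HB Require Import structures.
From mathcomp Require Import all_boot all_order all_algebra.
From mathcomp Require Import all_classical all_reals all_analysis.
Set Implicit Arguments. Unset Strict Implicit. Unset Printing Implicit Defensive.
Import Order.TTheory GRing.Theory Num.Theory.
Import numFieldNormedType.Exports.
Local Open Scope ring_scope.

Fixpoint Ck {R : realType} {V : normedModType R} (n : nat) (f : V -> R) : Prop :=
  match n with
  | 0 => continuous f
  | n'.+1 => (forall x, differentiable f x) /\ forall v : V, Ck n' (fun x => 'D_v f x)
  end.
Definition smooth {R : realType} {V : normedModType R} (f : V -> R) : Prop :=
  forall n, Ck n f.

(* Points of R^6 = (t, t^-, q, q^-, p, p^-) and of R^3 = (t, q, p). *)
Definition R6 (R : realType) := (R * R * R * R * R * R)%type.
Definition R3 (R : realType) := (R * R * R)%type.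

Section DelayData.
Variable R : realType.
Variable tau a1 a2 a3 a4 : R.
Variables q p : R -> R.
Variable H : R6 R -> R.
Variables xi eta nu : R3 R -> R.

Definition D (f : R -> R) : R -> R := derive1 f.
Definition Sm (f : R -> R) : R -> R := fun t => f (t - tau).

Definition qd := D q.
Definition pd := D p.

Definition pt6 (t : R) : R6 R := (t, t - tau, q t, q (t - tau), p t, p (t - tau)).
Definition Hc (t : R) : R := H (pt6 t).

Definition e_t  : R6 R := (1, 0, 0, 0, 0, 0).
Definition e_tm : R6 R := (0, 1, 0, 0, 0, 0).
Definition e_q  : R6 R := (0, 0, 1, 0, 0, 0).
Definition e_qm : R6 R := (0, 0, 0, 1, 0, 0).
Definition e_p  : R6 R := (0, 0, 0, 0, 1, 0).
Definition e_pm : R6 R := (0, 0, 0, 0, 0, 1).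

Definition Ht  t := 'D_e_t  H (pt6 t).
Definition Htm t := 'D_e_tm H (pt6 t).
Definition Hq  t := 'D_e_q  H (pt6 t).
Definition Hqm t := 'D_e_qm H (pt6 t).
Definition Hp  t := 'D_e_p  H (pt6 t).
Definition Hpm t := 'D_e_pm H (pt6 t).

Definition xic  t := xi  (t, q t, p t).
Definition etac t := eta (t, q t, p t).
Definition nuc  t := nu  (t, q t, p t).

Definition Omega (t : R) : R :=
  nuc (t - tau) * (a1 * qd t + a2 * qd (t - tau))
  + p (t - tau) * (a1 * D etac t + a2 * D (Sm etac) t)
  + nuc t * (a3 * qd t + a4 * qd (t - tau))
  + p t * (a3 * D etac t + a4 * D (Sm etac) t)
  + (a2 * p (t - tau) + a4 * p t) * qd (t - tau) * D (fun s => xic s - Sm xic s) t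
  - xic t * Ht t - etac t * Hq t - nuc t * Hp t
  - xic (t - tau) * Htm t - etac (t - tau) * Hqm t - nuc (t - tau) * Hpm t
  - Hc t * D xic t.

Definition Cfl (t : R) : R :=
  etac t * (a4 * p (t + tau) + (a2 + a3) * p t + a1 * p (t - tau))
  - xic t * (a2 * (p t * qd t - p (t - tau) * qd (t - tau))
             + a4 * (p (t + tau) * qd t - p t * qd (t - tau)) + Hc t).

Definition Pfl (t : R) : R :=
  (a2 * p (t - tau) + a4 * p t) * D (Sm etac) t
  + nuc (t - tau) * (a1 * qd t + a2 * qd (t - tau))
  - (a2 * p (t - tau) + a4 * p t) * qd (t - tau) * D (Sm xic) t
  - xic (t - tau) * Htm t - etac (t - tau) * Hqm t - nuc (t - tau) * Hpm t.

Definition dHp (t : R) : R :=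
  a1 * qd (t + tau) + (a2 + a3) * qd t + a4 * qd (t - tau)
  - (Hp t + Hpm (t + tau)).
Definition dHq (t : R) : R :=
  - (a4 * pd (t + tau) + (a2 + a3) * pd t + a1 * pd (t - tau)
     + (Hq t + Hqm (t + tau))).
Definition dHt (t : R) : R :=
  D (fun s => a2 * (p s * qd s - p (s - tau) * qd (s - tau))
              + a4 * (p (s + tau) * qd s - p s * qd (s - tau))) t
  + D Hc t - (Ht t + Htm (t + tau)).

Definition Rhs (t : R) : R :=
  xic t * dHt t + etac t * dHq t + nuc t * dHp t + D Cfl t
  + (Pfl t - Pfl (t + tau)).

End DelayData.

From HB Require Import structures.
From mathcomp Require Import all_boot all_order all_algebra.
From mathcomp Require Import all_classical all_reals all_analysis.
From mathcomp Require Import ring.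

Set Implicit Arguments.
Unset Strict Implicit.
Unset Printing Implicit Defensive.
Import Order.TTheory GRing.Theory Num.Theory.
Import numFieldNormedType.Exports.
Local Open Scope ring_scope.

(* Expanding D(C) by the product rule and commuting D with the shifts turns
   both sides into polynomials in the values at t and t +- tau of p, q', p',
   xi, eta, nu, the partial derivatives of H, and the derivatives of xi, eta,
   H and of the bracket in dH~/dt; these polynomials coincide.  The terms of
   Omega at t - tau come from P, while -S_+ P cancels the shifted partials
   H_{t^-}, H_{q^-}, H_{p^-} at t + tau inside the variational derivatives. *)

Section DerivativeRules.
Variable R : realType.
Implicit Types (f g : R -> R) (c k t : R).

Lemma D_add f g t : differentiable f t -> differentiable g t ->
  D (fun s => f s + g s) t = D f t + D g t.
Proof.
by move=> /derivable1_diffP df /derivable1_diffP dg; rewrite /D !derive1E deriveD.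
Qed.

Lemma D_sub f g t : differentiable f t -> differentiable g t ->
  D (fun s => f s - g s) t = D f t - D g t.
Proof.
by move=> /derivable1_diffP df /derivable1_diffP dg; rewrite /D !derive1E deriveB.
Qed.

Lemma D_mul f g t : differentiable f t -> differentiable g t ->
  D (fun s => f s * g s) t = f t * D g t + g t * D f t.
Proof.
by move=> /derivable1_diffP df /derivable1_diffP dg; rewrite /D !derive1E deriveM.
Qed.

Lemma D_scale f k t : differentiable f t -> D (fun s => k * f s) t = k * D f t.
Proof. by move=> /derivable1_diffP df; rewrite /D !derive1E deriveZ. Qed.

Lemma D_shift f c t : D (fun s => f (s + c)) t = D f (t + c).
Proof. by rewrite /D /derive1; under [in RHS]eq_fun do rewrite addrA. Qed.

Lemma D_Sm tau f t : D (Sm tau f) t = D f (t - tau).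
Proof. exact: D_shift. Qed.

Lemma differentiable_shift f c t :
  differentiable f (t + c) -> differentiable (fun s => f (s + c)) t.
Proof. by move=> dfc; apply: differentiable_comp. Qed.

End DerivativeRules.

Lemma smooth_differentiable (R : realType) (V : normedModType R) (f : V -> R) x :
  smooth f -> differentiable f x.
Proof. by move=> sf; exact: (sf 1%N).1. Qed.

Lemma smooth_D_differentiable (R : realType) (f : R -> R) x :
  smooth f -> differentiable (D f) x.
Proof.
move=> sf; have -> : D f = 'D_1 f by apply/funext => y; rewrite /D derive1E.
exact: ((sf 2%N).2 1).1.
Qed.

Section DelayedFlux.
Variable R : realType.
Variables tau a1 a2 a3 a4 : R.
Variables q p : R -> R.
Variable H : R6 R -> R.
Variables xi eta : R3 R -> R.

Hypothesis dq : forall x, differentiable q x.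
Hypothesis dp : forall x, differentiable p x.
Hypothesis dqd : forall x, differentiable (qd q) x.
Hypothesis dH : forall x, differentiable H x.
Hypothesis dxi : forall x, differentiable xi x.
Hypothesis deta : forall x, differentiable eta x.

Lemma differentiable_along_path (f : R3 R -> R) t :
  (forall x, differentiable f x) -> differentiable (fun s => f (s, q s, p s)) t.
Proof.
move=> df; apply: differentiable_comp => //.
by apply: differentiable_pair => //; apply: differentiable_pair.
Qed.

Lemma differentiable_Hc t : differentiable (Hc tau q p H) t.
Proof.
have dshift (f : R -> R) : (forall x, differentiable f x) ->
    differentiable (fun s => f (s - tau)) t by move=> df; apply: differentiable_shift.
apply: differentiable_comp => //.
apply: differentiable_pair; last exact: dshift.
apply: differentiable_pair => //.
apply: differentiable_pair; last exact: dshift.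
by apply: differentiable_pair.
Qed.

(* The flux C is eta * momentum_sum - xi * (action_flux + H), where
   action_flux is the bracket differentiated in dH~/dt. *)
Definition momentum_sum s := a4 * p (s + tau) + (a2 + a3) * p s + a1 * p (s - tau).

Definition action_flux s :=
  a2 * (p s * qd q s - p (s - tau) * qd q (s - tau))
  + a4 * (p (s + tau) * qd q s - p s * qd q (s - tau)).

Lemma differentiable_momentum_sum t : differentiable momentum_sum t.
Proof.
by apply: differentiableD; first apply: differentiableD;
  apply: differentiableZ => //; apply: differentiable_shift.
Qed.

Lemma differentiable_action_flux t : differentiable action_flux t.
Proof.
by apply: differentiableD; apply: differentiableZ; apply: differentiableB;
  apply: differentiableM => //; apply: differentiable_shift.
Qed.

Lemma D_momentum_sum t :
  D momentum_sum t = a4 * pd p (t + tau) + (a2 + a3) * pd p t + a1 * pd p (t - tau).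
Proof.
have dps c : differentiable (fun s => p (s + c)) t by exact: differentiable_shift.
rewrite /momentum_sum D_add; last 2 first.
- by apply: differentiableD; apply: differentiableZ.
- exact: differentiableZ.
rewrite D_add; try exact: differentiableZ.
by rewrite !D_scale // !D_shift.
Qed.

Lemma D_Cfl t :
  D (Cfl tau a1 a2 a3 a4 q p H xi eta) t =
  D (etac q p eta) t * momentum_sum t + etac q p eta t * D momentum_sum t
  - (D (xic q p xi) t * (action_flux t + Hc tau q p H t)
     + xic q p xi t * (D action_flux t + D (Hc tau q p H) t)).
Proof.
have deta_t : differentiable (etac q p eta) t by exact: differentiable_along_path.
have dxi_t : differentiable (xic q p xi) t by exact: differentiable_along_path.
have dflux : differentiable (fun s => action_flux s + Hc tau q p H s) t.
  exact: differentiableD (differentiable_action_flux t) (differentiable_Hc t).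
have -> : Cfl tau a1 a2 a3 a4 q p H xi eta =
    fun s => etac q p eta s * momentum_sum s
             - xic q p xi s * (action_flux s + Hc tau q p H s) by [].
rewrite D_sub; last 2 first.
- exact: differentiableM (differentiable_momentum_sum t).
- exact: differentiableM.
rewrite !D_mul //; last exact: differentiable_momentum_sum.
rewrite (D_add (f := action_flux)); first ring.
- exact: differentiable_action_flux.
- exact: differentiable_Hc.
Qed.

End DelayedFlux.

Theorem lemma2 (R : realType) (tau a1 a2 a3 a4 : R) (q p : R -> R)
    (H : R6 R -> R) (xi eta_ nu : R3 R -> R) :
  0 < tau ->
  smooth q -> smooth p -> smooth H -> smooth xi -> smooth eta_ -> smooth nu ->
  forall t : R,
    Omega tau a1 a2 a3 a4 q p H xi eta_ nu t =
    Rhs tau a1 a2 a3 a4 q p H xi eta_ nu t.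
Proof.
move=> _ sq sp sH sxi seta _ t.
have dq x := smooth_differentiable x sq.
have dp x := smooth_differentiable x sp.
have dqd x := smooth_D_differentiable x sq.
have dH x := smooth_differentiable x sH.
have dxi x := smooth_differentiable x sxi.
have deta x := smooth_differentiable x seta.
have dxic x : differentiable (xic q p xi) x by apply: differentiable_along_path.
rewrite /Omega /Rhs /dHt /dHq /dHp /Pfl D_Cfl //.
rewrite D_momentum_sum // D_sub ?D_Sm; last 2 first.
- exact: dxic.
- exact: differentiable_shift.
by rewrite /momentum_sum /action_flux !addrK; ring.
Qed.
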